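(* Let $\mathcal A=\{p_1,\dots,p_n\}\subset\mathbb R^2$ be a point set not contained in a line, with $p_1$ and $p_2$ having different second coordinates. Then the expansion cone $\overline{Y_0}(\mathcal A)$ has full dimension $3n-3$ in $S$, and it is a pointed polyhedral cone, i.e. it contains no pair of opposite non-zero vectors.
   Context: Write $v_i=(v_i^1,v_i^2)\in\mathbb R^2$. Define $$S=\{(v_1,\dots,v_n,t_1,\dots,t_n)\in(\mathbb R^2)^n\times\mathbb R^n:\ v_1^1=v_1^2=v_2^1=0\},$$ a $(3n-3)$-dimensional subspace of $\mathbb R^{3n}$. The expansion cone $\overline{Y_0}(\mathcal A)$ is the set of $(v,t)\in S$ satisfying both of: - $\langle p_i-p_j,v_i-v_j\rangle-|p_i-p_j|(t_i+t_j)\ge 0$ for all $1\le i<j\le n$; - $t_j\ge 0$ for all $j$. *)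

From HB Require Import structures.
From mathcomp Require Import all_boot all_order all_algebra.
From mathcomp Require Import reals.
Set Implicit Arguments. Unset Strict Implicit. Unset Printing Implicit Defensive.
Import Order.TTheory GRing.Theory Num.Theory.
Local Open Scope ring_scope.

Section Defs.
Variable R : realType.

Definition dot2 (a b : R * R) : R := a.1 * b.1 + a.2 * b.2.
Definition sub2 (a b : R * R) : R * R := (a.1 - b.1, a.2 - b.2).
Definition norm2 (a : R * R) : R := Num.sqrt (dot2 a a).

(* A configuration (v_1,...,v_N,t_1,...,t_N) in R^{3N} is a row vector of
   length N + N + N: first block = first coordinates v_i^1, second block =
   second coordinates v_i^2, third block = t_i. *)
Definition vec1 N (x : 'rV[R]_(N + N + N)) (i : 'I_N) : R :=
  x ord0 (lshift N (lshift N i)).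
Definition vec2 N (x : 'rV[R]_(N + N + N)) (i : 'I_N) : R :=
  x ord0 (lshift N (rshift N i)).
Definition vecv N (x : 'rV[R]_(N + N + N)) (i : 'I_N) : R * R :=
  (vec1 x i, vec2 x i).
Definition tcoord N (x : 'rV[R]_(N + N + N)) (i : 'I_N) : R :=
  x ord0 (rshift (N + N) i).

(* The first two indices (p_1 and p_2 of the paper); we index from 0. *)
Definition idx1 n : 'I_n.+2 := ord0.
Definition idx2 n : 'I_n.+2 := lift ord0 ord0.

Definition inS n (x : 'rV[R]_(n.+2 + n.+2 + n.+2)) : Prop :=
  vec1 x (idx1 n) = 0 /\ vec2 x (idx1 n) = 0 /\ vec1 x (idx2 n) = 0.

Definition expansion_cone n (p : 'I_n.+2 -> R * R)
  (x : 'rV[R]_(n.+2 + n.+2 + n.+2)) : Prop :=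
  inS x /\
  (forall i j : 'I_n.+2, (i < j)%N ->
     dot2 (sub2 (p i) (p j)) (sub2 (vecv x i) (vecv x j))
     - norm2 (sub2 (p i) (p j)) * (tcoord x i + tcoord x j) >= 0) /\
  (forall j : 'I_n.+2, tcoord x j >= 0).

Definition collinear N (p : 'I_N -> R * R) : Prop :=
  exists a b c : R, (a, b) != (0, 0) /\ forall i, a * (p i).1 + b * (p i).2 = c.

End Defs.

From HB Require Import structures.
From mathcomp Require Import all_boot all_order all_algebra.
From mathcomp Require Import reals ring lra.
Set Implicit Arguments. Unset Strict Implicit. Unset Printing Implicit Defensive.
Import Order.TTheory GRing.Theory Num.Theory.
Local Open Scope ring_scope.

(* If x and -x both lie in the cone, every t_j vanishes and every edge
   inequality is an equality, so v is an infinitesimal motion of the complete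
   framework on the points; as the points are not collinear such a motion is a
   Euclidean one, and the three pinned coordinates of S force it to be zero.
   For full dimension, the velocity of an infinitesimal spiral similarity about
   p_1 (rotated so as to lie in S) strictly stretches every edge, so a large
   multiple of it plus t = 1 is an interior point x0.  Every y in S then
   satisfies y = (K x0 + y) - K x0 with K x0 + y in the cone for K large, so the
   cone spans S, which has dimension 3N - 3. *)

Section PlaneGeometry.
Variable R : realType.
Implicit Types a b z : R * R.

Definition cross2 a b : R := a.1 * b.2 - a.2 * b.1.

Lemma dot2_eq0_cross a b z :
  dot2 a z = 0 -> dot2 b z = 0 -> cross2 a b != 0 -> z = (0, 0).
Proof.
move=> az bz ab.
have z1 : z.1 * cross2 a b = b.2 * dot2 a z - a.2 * dot2 b z by rewrite /cross2 /dot2; ring.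
have z2 : z.2 * cross2 a b = a.1 * dot2 b z - b.1 * dot2 a z by rewrite /cross2 /dot2; ring.
rewrite az bz !mulr0 subrr in z1 z2.
move/eqP: z1; move/eqP: z2; rewrite !mulf_eq0 (negbTE ab) !orbF => /eqP z2 /eqP z1.
by rewrite [z]surjective_pairing z1 z2.
Qed.

Lemma not_collinear_cross N (p : 'I_N -> R * R) i j :
  ~ collinear p -> p i != p j ->
  exists k, cross2 (sub2 (p j) (p i)) (sub2 (p k) (p i)) != 0.
Proof.
move=> noncol pij; set d := sub2 (p j) (p i).
case: (pickP (fun k => cross2 d (sub2 (p k) (p i)) != 0)) => [k | online]; first by exists k.
case: noncol; exists (- d.2), d.1, (- d.2 * (p i).1 + d.1 * (p i).2); split.
  apply: contra pij; rewrite /d /sub2 /=; case: (p i) (p j) => [a1 a2] [b1 b2] /=.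
  by rewrite xpair_eqE oppr_eq0 !subr_eq0 => /andP[/eqP -> /eqP ->].
move=> k; have /negbFE/eqP cross0 := online k.
by apply/eqP; rewrite -subr_eq0; apply/eqP; rewrite -[RHS]cross0 /cross2 /d /sub2 /=; ring.
Qed.

(* The velocity field of the infinitesimal spiral similarity about [c]:
   dilation plus rotation with angular speed [om]. *)
Definition spiral2 (om : R) c a : R * R :=
  ((a.1 - c.1) - om * (a.2 - c.2), (a.2 - c.2) + om * (a.1 - c.1)).

Lemma spiral2_stretch om c a b :
  dot2 (sub2 a b) (sub2 (spiral2 om c a) (spiral2 om c b)) = dot2 (sub2 a b) (sub2 a b).
Proof. by rewrite /dot2 /sub2 /spiral2 /=; ring. Qed.

Lemma dot2_sub2_gt0 a b : a != b -> 0 < dot2 (sub2 a b) (sub2 a b).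
Proof.
move=> ab; rewrite /dot2 /sub2 /= -!expr2 lt_def addr_ge0 ?sqr_ge0 // andbT.
rewrite paddr_eq0 ?sqr_ge0 // !sqrf_eq0 !subr_eq0; apply: contra ab.
by case: a b => [a1 a2] [b1 b2] /= /andP[/eqP -> /eqP ->].
Qed.

Section Rigidity.
Variables (N : nat) (p v : 'I_N -> R * R).
Hypothesis flex : forall i j, dot2 (sub2 (p i) (p j)) (sub2 (v i) (v j)) = 0.

Lemma flex_orth (a b : 'I_N) : v a = (0, 0) -> v b = (0, 0) ->
  forall i, dot2 (sub2 (p a) (p b)) (v i) = 0.
Proof.
move=> va vb i; have := flex i a; have := flex i b; rewrite va vb /dot2 /sub2 /=.
lra.
Qed.

Lemma flex_trivial (a b : 'I_N) : ~ collinear p -> (p a).2 != (p b).2 ->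
  v a = (0, 0) -> (v b).1 = 0 -> forall i, v i = (0, 0).
Proof.
move=> noncol pab va vb1.
have vb : v b = (0, 0).
  have := flex a b; rewrite va /dot2 /sub2 /= vb1 => e.
  have /eqP : ((p a).2 - (p b).2) * (v b).2 = 0 by lra.
  rewrite mulf_eq0 subr_eq0 (negbTE pab) /= => /eqP vb2.
  by rewrite [v b]surjective_pairing vb1 vb2.
have [|k pk] := not_collinear_cross noncol (i := a) (j := b).
  by apply: contra pab => /eqP ->.
have vk : v k = (0, 0).
  apply: dot2_eq0_cross pk; first exact: flex_orth.
  by have := flex k a; rewrite va /dot2 /sub2 /= !subr0.
by move=> i; apply: dot2_eq0_cross pk; apply: flex_orth.
Qed.

End Rigidity.
End PlaneGeometry.

Section Absorption.
Variables (R : realFieldType) (V : lmodType R) (I : finType) (f : I -> V -> R).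
Hypothesis f_linear : forall i a x y, f i (a *: x + y) = a * f i x + f i y.

Definition absorb_coef (x0 y : V) : R := 1 + \sum_i `|f i y| / f i x0.

Lemma absorb_coefP x0 y : (forall i, 0 < f i x0) ->
  forall i, 0 < f i (absorb_coef x0 y *: x0 + y).
Proof.
move=> x0_pos i; rewrite f_linear /absorb_coef mulrDl mul1r.
have term_le : `|f i y| / f i x0 <= \sum_k `|f k y| / f k x0.
  rewrite (bigD1 i) //= lerDl; apply: sumr_ge0 => k _.
  by rewrite divr_ge0 // ltW.
have : `|f i y| <= (\sum_k `|f k y| / f k x0) * f i x0.
  by rewrite -ler_pdivrMr.
have := ler_norm (- f i y); rewrite normrN.
have := x0_pos i; lra.
Qed.

End Absorption.

Section SpanOfCone.
Variables (R : fieldType) (V : vectType R).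

Lemma span_absorbed (C : V -> Prop) (B : seq V) (x0 : V) (K : V -> R) :
  (forall x, C x -> x \in <<B>>%VS) -> C x0 ->
  (forall b, b \in B -> C (K b *: x0 + b)) ->
  <<x0 :: [seq (K b *: x0 + b)%R | b <- B]>>%VS = <<B>>%VS.
Proof.
move=> CB Cx0 CK; apply/vspaceP => x; apply/idP/idP; apply: subvP.
  by apply/span_subvP => y /predU1P[-> | /mapP[b /CK Cb ->]]; apply: CB.
apply/span_subvP => b Bb.
have -> : b = (K b *: x0 + b) - K b *: x0 by rewrite addrC addKr.
apply: memvB.
  by apply: memv_span; rewrite inE (map_f (fun b => K b *: x0 + b)) ?orbT.
by apply/memvZ/memv_span/mem_head.
Qed.

End SpanOfCone.

Lemma free_row_deltas (F : fieldType) m (P : pred 'I_m) :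
  free [seq delta_mx 0 k : 'rV[F]_m | k <- enum 'I_m & P k].
Proof.
have free_all : free [seq delta_mx 0 k : 'rV[F]_m | k <- enum 'I_m].
  apply: (@basis_free _ _ fullv); rewrite basisEdim size_map size_enum_ord.
  rewrite dimvf dim_matrix mul1r leqnn andbT; apply/subvP => x _.
  rewrite [x]matrix_sum_delta big_ord1; apply: memv_suml => k _.
  by apply/memvZ/memv_span/map_f; rewrite mem_enum.
set supp_in_P := [pred v : 'rV[F]_m | [forall k, (v 0 k != 0) ==> P k]].
suff -> : [seq delta_mx 0 k : 'rV[F]_m | k <- enum 'I_m & P k]
        = filter supp_in_P [seq delta_mx 0 k | k <- enum 'I_m].
  exact: filter_free.
rewrite [RHS]filter_map; congr (map _ _); apply: eq_filter => k /=.
apply/idP/forallP => [Pk j | /(_ k)]; rewrite mxE eqxx /=.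
  by case: (eqVneq j k) => [-> | _]; rewrite ?Pk ?implybT ?eqxx.
by rewrite eqxx oner_eq0.
Qed.

Section RowCoordinates.
Variables (R : realType) (N : nat).

Definition mkrow (f1 f2 f3 : 'I_N -> R) : 'rV[R]_(N + N + N) :=
  \row_k match split k with
         | inl k' => match split k' with inl i => f1 i | inr i => f2 i end
         | inr i => f3 i
         end.

Lemma vec1_mkrow f1 f2 f3 i : vec1 (mkrow f1 f2 f3) i = f1 i.
Proof. by rewrite /vec1 mxE (unsplitK (inl _ (lshift N i))) (unsplitK (inl _ i)). Qed.

Lemma vec2_mkrow f1 f2 f3 i : vec2 (mkrow f1 f2 f3) i = f2 i.
Proof. by rewrite /vec2 mxE (unsplitK (inl _ (rshift N i))) (unsplitK (inr _ i)). Qed.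

Lemma tcoord_mkrow f1 f2 f3 i : tcoord (mkrow f1 f2 f3) i = f3 i.
Proof. by rewrite /tcoord mxE (unsplitK (inr _ i)). Qed.

Lemma row3P (x y : 'rV[R]_(N + N + N)) :
  vec1 x =1 vec1 y -> vec2 x =1 vec2 y -> tcoord x =1 tcoord y -> x = y.
Proof.
move=> e1 e2 e3; apply/rowP => k; rewrite -(splitK k).
case: (split k) => [k' | i]; last exact: e3.
by rewrite -(splitK k'); case: (split k') => i; [exact: e1 | exact: e2].
Qed.

End RowCoordinates.

Section SubspaceS.
Variables (R : realType) (n : nat).
Local Notation N := n.+2.
Local Notation M := (N + N + N)%N.

Definition pinned_coords : seq 'I_M :=
  [:: lshift N (lshift N (idx1 n)); lshift N (rshift N (idx1 n));
      lshift N (lshift N (idx2 n))].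

Lemma inSP (x : 'rV[R]_M) : inS x <-> forall k, k \in pinned_coords -> x 0 k = 0.
Proof.
split=> [[x1 [x2 x3]] k | x0]; first by rewrite !inE => /or3P[] /eqP ->.
by split; [|split]; apply: x0; rewrite !inE eqxx ?orbT.
Qed.

Lemma inS_lin a (x y : 'rV[R]_M) : inS x -> inS y -> inS (a *: x + y).
Proof.
move=> /inSP x0 /inSP y0; apply/inSP => k kS.
by rewrite !mxE x0 ?y0 // mulr0 addr0.
Qed.

Definition S_basis : seq 'rV[R]_M :=
  [seq delta_mx 0 k | k <- enum 'I_M & k \notin pinned_coords].

Lemma S_basis_inS b : b \in S_basis -> inS b.
Proof.
case/mapP=> k; rewrite mem_filter => /andP[kS _] ->; apply/inSP => j jS.
by rewrite mxE (_ : j == k = false) ?andbF //; apply: contraNF kS => /eqP <-.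
Qed.

Lemma inS_span_S_basis x : inS x -> x \in <<S_basis>>%VS.
Proof.
move/inSP=> x0; rewrite [x]matrix_sum_delta big_ord1.
rewrite (bigID (mem pinned_coords)) /= big1 ?add0r => [|k /x0 ->]; last by rewrite scale0r.
apply: memv_suml => k kS; apply/memvZ/memv_span/map_f.
by rewrite mem_filter kS mem_enum.
Qed.

Lemma dim_S_basis : \dim <<S_basis>> = (M - 3)%N.
Proof.
rewrite (eqP (free_row_deltas _ _)) size_map size_filter.
have -> : count [predC pinned_coords] (enum 'I_M) = #|[predC pinned_coords]|.
  by rewrite cardE -size_filter enumT.
have := cardC (mem pinned_coords); rewrite card_ord (card_uniqP _) //.
by move/(congr1 (subn^~ 3)); rewrite addKn.
Qed.

End SubspaceS.

Section ExpansionCone.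
Variables (R : realType) (n : nat) (p : 'I_n.+2 -> R * R).
Local Notation N := n.+2.
Local Notation M := (N + N + N)%N.
Implicit Types x y : 'rV[R]_M.

Definition edge_slack x i j : R :=
  dot2 (sub2 (p i) (p j)) (sub2 (vecv x i) (vecv x j))
  - norm2 (sub2 (p i) (p j)) * (tcoord x i + tcoord x j).

Definition edge := {ij : 'I_N * 'I_N | (ij.1 < ij.2)%N}.

Definition cone_form (c : edge + 'I_N) x : R :=
  match c with
  | inl e => edge_slack x (val e).1 (val e).2
  | inr j => tcoord x j
  end.

Lemma cone_form_linear c a x y :
  cone_form c (a *: x + y) = a * cone_form c x + cone_form c y.
Proof.
case: c => [e | j] /=; last by rewrite /tcoord !mxE.
by rewrite /edge_slack /vecv /vec1 /vec2 /tcoord /dot2 /sub2 /= !mxE; ring.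
Qed.

Lemma cone_formN c x : cone_form c (- x) = - cone_form c x.
Proof.
case: c => [e | j] /=; last by rewrite /tcoord !mxE.
by rewrite /edge_slack /vecv /vec1 /vec2 /tcoord /dot2 /sub2 /= !mxE; ring.
Qed.

Lemma expansion_coneE x :
  expansion_cone p x <-> inS x /\ forall c, 0 <= cone_form c x.
Proof.
split=> [[xS [x_edge x_t]] | [xS x_ge0]].
  by split=> // -[[[i j] /= lij] | j] //=; apply: x_edge.
split=> //; split=> [i j lij | j]; last exact: (x_ge0 (inr j)).
exact: (x_ge0 (inl (exist _ (i, j) lij))).
Qed.

Lemma strict_interior_in_cone x :
  inS x -> (forall c, 0 < cone_form c x) -> expansion_cone p x.
Proof. by move=> xS x_gt0; apply/expansion_coneE; split=> // c; apply/ltW. Qed.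

Lemma expansion_cone_pointed x :
  ~ collinear p -> (p (idx1 n)).2 != (p (idx2 n)).2 ->
  expansion_cone p x -> expansion_cone p (- x) -> x = 0.
Proof.
move=> noncol p12 /expansion_coneE[[x11 [x12 x21]] x_ge0] /expansion_coneE[_ xN_ge0].
have form0 c : cone_form c x = 0.
  by apply/eqP; rewrite eq_le x_ge0 andbT -oppr_ge0 -cone_formN.
have t0 j : tcoord x j = 0 := form0 (inr j).
have flex i j : dot2 (sub2 (p i) (p j)) (sub2 (vecv x i) (vecv x j)) = 0.
  have edge0 (k l : 'I_N) (lt_kl : (k < l)%N) :
      dot2 (sub2 (p k) (p l)) (sub2 (vecv x k) (vecv x l)) = 0.
    by have := form0 (inl (exist _ (k, l) lt_kl)); rewrite /= /edge_slack !t0 addr0 mulr0 subr0.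
  case: (ltngtP i j) => [/edge0 // | /edge0 | /val_inj ->].
    by rewrite /dot2 /sub2 /=; lra.
  by rewrite /dot2 /sub2 !subrr !mul0r addr0.
have v1_0 : vecv x (idx1 n) = (0, 0) by rewrite /vecv x11 x12.
have v0 := flex_trivial flex noncol p12 v1_0 x21.
apply: row3P => i; rewrite /vec1 /vec2 /tcoord mxE; last exact: t0.
  by case: (v0 i).
by case: (v0 i).
Qed.

Lemma expansion_cone_interior :
  injective p -> (p (idx1 n)).2 != (p (idx2 n)).2 ->
  exists2 x0, inS x0 & forall c, 0 < cone_form c x0.
Proof.
move=> p_inj p12.
set c := p (idx1 n); set d := p (idx2 n).
have d2c2 : d.2 - c.2 != 0 by rewrite subr_eq0 eq_sym.
pose om := (d.1 - c.1) / (d.2 - c.2).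
(* [om] makes p_2 move vertically, as required in S. *)
pose w := mkrow (fun i => (spiral2 om c (p i)).1) (fun i => (spiral2 om c (p i)).2) (fun=> 0).
pose u : 'rV[R]_M := mkrow (fun=> 0) (fun=> 0) (fun=> 1).
have wS : inS w.
  rewrite /inS !vec1_mkrow vec2_mkrow /spiral2 -/c -/d /om divfK //.
  by rewrite !subrr mulr0 subr0 addr0.
have uS : inS u by rewrite /inS !vec1_mkrow vec2_mkrow.
have w_edge (e : edge) : 0 < cone_form (inl e) w.
  case: e => [[i j] /= lij]; rewrite /edge_slack !tcoord_mkrow addr0 mulr0 subr0.
  rewrite /vecv !vec1_mkrow !vec2_mkrow -!surjective_pairing spiral2_stretch.
  by apply: dot2_sub2_gt0; apply/negP => /eqP /p_inj eq_ij; move: lij; rewrite eq_ij ltnn.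
have linear e := cone_form_linear (inl e).
exists (absorb_coef (fun e => cone_form (inl e)) w u *: w + u); first exact: inS_lin.
case=> [e | j]; first exact: (absorb_coefP linear).
by rewrite cone_form_linear /= !tcoord_mkrow mulr0 add0r ltr01.
Qed.

Lemma expansion_cone_full_dim :
  injective p -> (p (idx1 n)).2 != (p (idx2 n)).2 ->
  exists X : seq 'rV[R]_M,
    (forall x, x \in X -> expansion_cone p x) /\ \dim <<X>> = (M - 3)%N.
Proof.
move=> p_inj p12; have [x0 x0S x0_gt0] := expansion_cone_interior p_inj p12.
have x0_cone := strict_interior_in_cone x0S x0_gt0.
pose K := absorb_coef cone_form x0.
have absorbed y : inS y -> expansion_cone p (K y *: x0 + y).
  move=> yS; apply/expansion_coneE; split; first exact: inS_lin.
  by move=> c; apply/ltW/absorb_coefP => //; apply: cone_form_linear.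
exists (x0 :: [seq K b *: x0 + b | b <- S_basis R n]); split.
  by move=> x /predU1P[-> // | /mapP[b /S_basis_inS bS ->]]; apply: absorbed.
rewrite (span_absorbed (C := expansion_cone p)) ?dim_S_basis //.
- by move=> x /expansion_coneE[xS _]; apply: inS_span_S_basis.
- by move=> b /S_basis_inS; apply: absorbed.
Qed.

End ExpansionCone.

Theorem mainTheorem9 (R : realType) (n : nat) (p : 'I_n.+2 -> R * R) :
  injective p ->
  ~ collinear p ->
  (p (idx1 n)).2 != (p (idx2 n)).2 ->
  (exists X : seq 'rV[R]_(n.+2 + n.+2 + n.+2),
      (forall x, x \in X -> expansion_cone p x) /\
      \dim (span X) = (3 * n.+2 - 3)%N) /\
  (forall x : 'rV[R]_(n.+2 + n.+2 + n.+2),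
      expansion_cone p x -> expansion_cone p (- x) -> x = 0).
Proof.
move=> p_inj noncol p12; split; last by move=> x; apply: expansion_cone_pointed.
have [X [X_cone dimX]] := expansion_cone_full_dim p_inj p12.
by exists X; split=> //; rewrite dimX !mulSn mul0n addn0 addnA.
Qed.
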